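(* Let $\leq$ be an admissible bi-invariant total order on a group $G$. Then $\leq$ is a quasi-total order, and for every dominant $g\in G^{++}$ the growth function $\gamma_g:G\to\mathbb{R}$ is a group homomorphism.
   Context: A partial order $\leq$ on a group $G$ is bi-invariant if $g\leq h$ implies $gk\leq hk$ and $kg\leq kh$ for all $g,h,k$. $G^+=\{g: g\geq e\}$; the dominants are $G^{++}=\{g\in G^+\setminus\{e\}: \forall h\in G\ \exists n\in\mathbb{N}_0,\ g^n\geq h\}$; admissible means $G^{++}\neq\emptyset$. For $g\in G^{++}$, $\gamma_g(h)=\lim_{n\to\infty}\frac1n\inf\{p\in\mathbb{Z}: g^p\geq h^n\}$. A half-space filtration of a set $X$ is a family $\{H_n\}_{n\in\mathbb{Z}}$ of subsets with $H_{n+1}\subsetneq H_n$, $\bigcap H_n=\emptyset$, $\bigcup H_n=X$; the height is $h(a)=\sup\{n: a\in H_n\}$ and $h(a,b)=h(a)-h(b)$. $(X,\preceq,\{H_n\})$ is a half-space order if $(X,\preceq)$ is a poset, $\{H_n\}$ a half-space filtration, and for some constant $w$, $h(a,b)\geq w\Rightarrow a\succeq b$. A $G$-action on $X$ is by quasi-automorphisms if for some $d$, $|h(ga,gb)-h(a,b)|\leq d$ for all $g,a,b$; unbounded if some $g\in G,a\in X$ satisfy $h(g^na)\to\pm\infty$ as $n\to\pm\infty$. For an effective action, the induced order on $G$ is $g\leq h\Leftrightarrow\forall k\in G\,\forall x\in X:(kg).x\preceq(kh).x$. A quasi-total order on $G$ is an order induced from an effective, unbounded action by quasi-automorphisms on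 some half-space order. *)

From Stdlib Require Import ZArith Reals.

Set Implicit Arguments.

Record Group := {
  carrier :> Type;
  gmul : carrier -> carrier -> carrier;
  gone : carrier;
  ginv : carrier -> carrier;
  gmulA : forall x y z, gmul x (gmul y z) = gmul (gmul x y) z;
  gmul1l : forall x, gmul gone x = x;
  gmul1r : forall x, gmul x gone = x;
  gmulVl : forall x, gmul (ginv x) x = gone;
  gmulVr : forall x, gmul x (ginv x) = gone
}.

Arguments gmul {g} _ _.
Arguments gone {g}.
Arguments ginv {g} _.

Definition natpow {G : Group} (g : G) (n : nat) : G := Nat.iter n (gmul g) gone.

Definition zpow {G : Group} (g : G) (p : Z) : G :=
  match p with
  | Z0 => gone
  | Zpos q => natpow g (Pos.to_nat q)
  | Zneg q => ginv (natpow g (Pos.to_nat q))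
  end.

Definition partial_order (X : Type) (le : X -> X -> Prop) : Prop :=
  (forall x, le x x) /\
  (forall x y, le x y -> le y x -> x = y) /\
  (forall x y z, le x y -> le y z -> le x z).

Definition bi_invariant {G : Group} (le : G -> G -> Prop) : Prop :=
  partial_order le /\
  forall g h k : G, le g h -> le (gmul g k) (gmul h k) /\ le (gmul k g) (gmul k h).

Definition total_rel (X : Type) (le : X -> X -> Prop) : Prop :=
  forall x y, le x y \/ le y x.

Definition positive {G : Group} (le : G -> G -> Prop) (g : G) : Prop := le gone g.

Definition dominant {G : Group} (le : G -> G -> Prop) (g : G) : Prop :=
  positive le g /\ g <> gone /\ forall h : G, exists n : nat, le h (natpow g n).

Definition admissible {G : Group} (le : G -> G -> Prop) : Prop :=
  exists g : G, dominant le g.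

(** p is the infimum (= least element) of { p in Z : g^p >= h^n }. *)
Definition least_power {G : Group} (le : G -> G -> Prop) (g h : G) (n : nat) (p : Z)
  : Prop :=
  le (natpow h n) (zpow g p) /\
  forall q : Z, le (natpow h n) (zpow g q) -> (p <= q)%Z.

(** gamma_g(h) = r : (1/n) inf{p : g^p >= h^n} converges to r as n -> oo
    (the sequence is indexed by n >= 1). *)
Definition growth_limit {G : Group} (le : G -> G -> Prop) (g h : G) (r : R) : Prop :=
  exists a : nat -> Z,
    (forall n : nat, least_power le g h (S n) (a n)) /\
    Un_cv (fun n => (IZR (a n) / INR (S n))%R) r.

Definition half_space_filtration (X : Type) (H : Z -> X -> Prop) : Prop :=
  (forall n : Z, (forall x, H (n + 1)%Z x -> H n x) /\
                 exists x, H n x /\ ~ H (n + 1)%Z x) /\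
  (forall x, exists n, ~ H n x) /\
  (forall x, exists n, H n x).

(** k = h(a) = sup { n : a in H_n } (a maximum, since it is a set of integers). *)
Definition is_height (X : Type) (H : Z -> X -> Prop) (a : X) (k : Z) : Prop :=
  H k a /\ forall n : Z, H n a -> (n <= k)%Z.

Definition half_space_order (X : Type) (leX : X -> X -> Prop) (H : Z -> X -> Prop)
  : Prop :=
  partial_order leX /\ half_space_filtration H /\
  exists w : R, forall a b ka kb,
    is_height H a ka -> is_height H b kb -> (IZR (ka - kb) >= w)%R -> leX b a.

Definition is_action {G : Group} (X : Type) (act : G -> X -> X) : Prop :=
  (forall x, act gone x = x) /\
  (forall g h x, act (gmul g h) x = act g (act h x)).

Definition effective {G : Group} (X : Type) (act : G -> X -> X) : Prop :=
  forall g : G, (forall x, act g x = x) -> g = gone.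

Definition by_quasi_automorphisms {G : Group} (X : Type) (H : Z -> X -> Prop)
  (act : G -> X -> X) : Prop :=
  exists d : R, forall (g : G) a b ka kb kga kgb,
    is_height H a ka -> is_height H b kb ->
    is_height H (act g a) kga -> is_height H (act g b) kgb ->
    (Rabs (IZR ((kga - kgb) - (ka - kb))) <= d)%R.

Definition unbounded_action {G : Group} (X : Type) (H : Z -> X -> Prop)
  (act : G -> X -> X) : Prop :=
  exists (g : G) (a : X),
    (forall M : Z, exists N : Z, forall n : Z, (n >= N)%Z ->
       forall k, is_height H (act (zpow g n) a) k -> (k >= M)%Z) /\
    (forall M : Z, exists N : Z, forall n : Z, (n <= N)%Z ->
       forall k, is_height H (act (zpow g n) a) k -> (k <= M)%Z).

Definition induced_order {G : Group} (X : Type) (leX : X -> X -> Prop)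
  (act : G -> X -> X) (g h : G) : Prop :=
  forall (k : G) (x : X), leX (act (gmul k g) x) (act (gmul k h) x).

Definition quasi_total {G : Group} (le : G -> G -> Prop) : Prop :=
  exists (X : Type) (leX : X -> X -> Prop) (H : Z -> X -> Prop) (act : G -> X -> X),
    half_space_order leX H /\ is_action act /\ effective act /\
    by_quasi_automorphisms H act /\ unbounded_action H act /\
    forall g h : G, le g h <-> induced_order leX act g h.

From Stdlib Require Import ZArith Zwf Reals Lia Lra Classical ClassicalEpsilon.

(* Fix a dominant g.  Every x lies below some power of g and above some
   negative power, so it has a least exponent p(x) with x <= g^p(x).  For a
   total bi-invariant order p is additive up to 1:
   p(x) + p(y) - 1 <= p(xy) <= p(x) + p(y).
   Taking H_n = {x | x > g^(n-1)}, whose height function is p, left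
   multiplication is an effective, unbounded action by quasi-automorphisms on
   (G, <=, H) inducing <=; so <= is quasi-total.
   The sequence p(h^n) is then quasi-additive, hence p(h^n)/n converges to some
   gamma(h).  Finally (hk)^n lies between h^n k^n and k^n h^n (an induction from
   hk <= kh or kh <= hk), so p((hk)^n) = p(h^n) + p(k^n) up to 1 and gamma is
   additive. *)

Set Implicit Arguments.
Unset Strict Implicit.

Local Notation "x ** y" := (gmul x y) (at level 40, left associativity).

Section GroupFacts.

Variable G : Group.
Implicit Types (g x y : G) (p q : Z).

Lemma inv_unique x y : x ** y = gone -> y = ginv x.
Proof.
  intro H. rewrite <- (gmul1l _ y), <- (gmulVl _ x), <- gmulA, H, gmul1r. reflexivity.
Qed.

Lemma inv_mul x y : ginv (x ** y) = ginv y ** ginv x.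
Proof.
  symmetry. apply inv_unique.
  rewrite <- gmulA, (gmulA _ y), gmulVr, gmul1l, gmulVr. reflexivity.
Qed.

Lemma inv_one : ginv (@gone G) = gone.
Proof. symmetry. apply inv_unique, gmul1l. Qed.

Lemma natpow_S g n : natpow g (S n) = g ** natpow g n.
Proof. reflexivity. Qed.

Lemma natpow_Sr g n : natpow g (S n) = natpow g n ** g.
Proof.
  induction n as [|n IH].
  - unfold natpow; simpl. rewrite gmul1r, gmul1l. reflexivity.
  - rewrite (natpow_S g (S n)), IH, gmulA, <- natpow_S, IH. reflexivity.
Qed.

Lemma natpow_add g m n : natpow g (m + n) = natpow g m ** natpow g n.
Proof.
  induction m as [|m IH].
  - unfold natpow at 2. simpl. rewrite gmul1l. reflexivity.
  - simpl plus. rewrite !natpow_S, IH, gmulA. reflexivity.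
Qed.

Lemma zpow_of_nat g n : zpow g (Z.of_nat n) = natpow g n.
Proof. destruct n as [|n]; [reflexivity|]. simpl. rewrite SuccNat2Pos.id_succ. reflexivity. Qed.

Lemma zpow_neg_nat g n : zpow g (- Z.of_nat n) = ginv (natpow g n).
Proof.
  destruct n as [|n].
  - symmetry. apply inv_one.
  - simpl. rewrite SuccNat2Pos.id_succ. reflexivity.
Qed.

Lemma zpow_succ g p : zpow g (Z.succ p) = zpow g p ** g.
Proof.
  destruct (Z_le_gt_dec 0 p) as [Hp|Hp].
  - assert (E : exists n, p = Z.of_nat n) by (exists (Z.to_nat p); lia).
    destruct E as [n ->].
    rewrite <- Nat2Z.inj_succ, !zpow_of_nat, natpow_Sr. reflexivity.
  - assert (E : exists n, p = (- Z.of_nat (S n))%Z) by (exists (Z.to_nat (- p - 1)); lia).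
    destruct E as [n ->].
    replace (Z.succ (- Z.of_nat (S n))) with (- Z.of_nat n)%Z by lia.
    rewrite !zpow_neg_nat, natpow_S, inv_mul, <- gmulA, gmulVl, gmul1r. reflexivity.
Qed.

Lemma zpow_pred g p : zpow g (Z.pred p) = zpow g p ** ginv g.
Proof.
  rewrite <- (Z.succ_pred p) at 2. rewrite zpow_succ, <- gmulA, gmulVr, gmul1r. reflexivity.
Qed.

Lemma zpow_add g p q : zpow g (p + q) = zpow g p ** zpow g q.
Proof.
  revert p. induction q using Z.peano_ind; intro p.
  - rewrite Z.add_0_r. simpl. rewrite gmul1r. reflexivity.
  - rewrite Z.add_succ_r, !zpow_succ, IHq, gmulA. reflexivity.
  - rewrite Z.add_pred_r, !zpow_pred, IHq, gmulA. reflexivity.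
Qed.

End GroupFacts.

Section BiInvariantOrder.

Variables (G : Group) (le : G -> G -> Prop).
Hypothesis Hbi : bi_invariant le.
Implicit Types (x y z t : G).

Lemma ord_refl x : le x x.
Proof. exact (proj1 (proj1 Hbi) x). Qed.

Lemma ord_antisym x y : le x y -> le y x -> x = y.
Proof. exact (proj1 (proj2 (proj1 Hbi)) x y). Qed.

Lemma ord_trans x y z : le x y -> le y z -> le x z.
Proof. exact (proj2 (proj2 (proj1 Hbi)) x y z). Qed.

Lemma ord_mul_r x y z : le x y -> le (x ** z) (y ** z).
Proof. intro H. exact (proj1 (proj2 Hbi x y z H)). Qed.

Lemma ord_mul_l x y z : le x y -> le (z ** x) (z ** y).
Proof. intro H. exact (proj2 (proj2 Hbi x y z H)). Qed.

Lemma ord_mul x y z t : le x y -> le z t -> le (x ** z) (y ** t).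
Proof.
  intros H1 H2. apply ord_trans with (y ** z); [apply ord_mul_r | apply ord_mul_l]; assumption.
Qed.

Lemma ord_cancel_r x y z : le (x ** z) (y ** z) -> le x y.
Proof.
  intro H. apply (ord_mul_r (ginv z)) in H.
  rewrite <- !gmulA, gmulVr, !gmul1r in H. exact H.
Qed.

Lemma ord_cancel_l x y z : le (z ** x) (z ** y) -> le x y.
Proof.
  intro H. apply (ord_mul_l (ginv z)) in H.
  rewrite !gmulA, gmulVl, !gmul1l in H. exact H.
Qed.

Lemma not_ord_mul x y z t : ~ le x z -> le t y -> ~ le (x ** y) (z ** t).
Proof.
  intros Hxz Hty Hle. apply Hxz, ord_cancel_r with t.
  apply ord_trans with (x ** y); [apply ord_mul_l|]; assumption.
Qed.

Lemma natpow_ge1 x : le gone x -> forall n, le gone (natpow x n).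
Proof.
  intros Hx n. induction n as [|n IH]; [apply ord_refl|].
  rewrite natpow_S, <- (gmul1l _ gone). apply ord_mul; assumption.
Qed.

Lemma ord_iff_induced_left_mul x y :
  le x y <-> induced_order le (fun a z : G => a ** z) x y.
Proof.
  split.
  - intros H k z. apply ord_mul_r, ord_mul_l, H.
  - intro H. specialize (H gone gone). simpl in H. rewrite !gmul1r, !gmul1l in H. exact H.
Qed.

Lemma mul_pow_le_pow_mul x y : le (x ** y) (y ** x) ->
  forall n, le (x ** natpow y n) (natpow y n ** x).
Proof.
  intros Hxy n. induction n as [|n IH].
  - unfold natpow; simpl. rewrite gmul1r, gmul1l. apply ord_refl.
  - rewrite natpow_Sr. apply ord_trans with (natpow y n ** x ** y).
    + rewrite gmulA. apply ord_mul_r, IH.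
    + rewrite <- !gmulA. apply ord_mul_l, Hxy.
Qed.

End BiInvariantOrder.

Lemma bi_invariant_flip (G : Group) (le : G -> G -> Prop) :
  bi_invariant le -> bi_invariant (fun x y => le y x).
Proof.
  intros [[Hrefl [Hanti Htrans]] Hmul]. split; [split; [|split]|].
  - exact Hrefl.
  - intros x y H1 H2. apply Hanti; assumption.
  - intros x y z H1 H2. apply Htrans with y; assumption.
  - intros x y k H. exact (Hmul y x k H).
Qed.

Lemma pow_mul_le_mul_pow (G : Group) (le : G -> G -> Prop) (x y : G) :
  bi_invariant le -> le (x ** y) (y ** x) ->
  forall n, le (natpow x n ** y) (y ** natpow x n).
Proof.
  intros Hbi Hxy n. exact (mul_pow_le_pow_mul (bi_invariant_flip Hbi) Hxy n).
Qed.

Lemma pow_mul_sandwich (G : Group) (le : G -> G -> Prop) (h k : G) :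
  bi_invariant le -> le (h ** k) (k ** h) ->
  forall n, le (natpow h n ** natpow k n) (natpow (h ** k) n) /\
            le (natpow (h ** k) n) (natpow k n ** natpow h n).
Proof.
  intros Hbi Hhk n. induction n as [|n [IH1 IH2]].
  - unfold natpow; simpl. rewrite gmul1r. split; apply (ord_refl Hbi).
  - rewrite !natpow_Sr. split.
    + apply (ord_trans Hbi) with (natpow h n ** (natpow k n ** h) ** k).
      * replace (natpow h n ** h ** (natpow k n ** k))
          with (natpow h n ** (h ** natpow k n) ** k) by (rewrite !gmulA; reflexivity).
        apply (ord_mul_r Hbi), (ord_mul_l Hbi), (mul_pow_le_pow_mul Hbi Hhk).
      * replace (natpow h n ** (natpow k n ** h) ** k)
          with (natpow h n ** natpow k n ** (h ** k)) by (rewrite !gmulA; reflexivity).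
        apply (ord_mul_r Hbi), IH1.
    + apply (ord_trans Hbi) with (natpow k n ** natpow h n ** (h ** k)).
      * apply (ord_mul_r Hbi), IH2.
      * replace (natpow k n ** natpow h n ** (h ** k))
          with (natpow k n ** ((natpow h n ** h) ** k)) by (rewrite !gmulA; reflexivity).
        replace (natpow k n ** k ** (natpow h n ** h))
          with (natpow k n ** (k ** (natpow h n ** h))) by (rewrite !gmulA; reflexivity).
        apply (ord_mul_l Hbi). rewrite <- natpow_Sr. apply (pow_mul_le_mul_pow Hbi Hhk).
Qed.

Lemma pow_mul_between (G : Group) (le : G -> G -> Prop) (h k : G) n :
  bi_invariant le -> total_rel le ->
  (le (natpow h n ** natpow k n) (natpow (h ** k) n) /\
   le (natpow (h ** k) n) (natpow k n ** natpow h n)) \/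
  (le (natpow k n ** natpow h n) (natpow (h ** k) n) /\
   le (natpow (h ** k) n) (natpow h n ** natpow k n)).
Proof.
  intros Hbi Htot. destruct (Htot (h ** k) (k ** h)) as [Hhk|Hkh].
  - left. apply pow_mul_sandwich; assumption.
  - right. destruct (pow_mul_sandwich (bi_invariant_flip Hbi) Hkh n). split; assumption.
Qed.

Lemma Z_least_element (P : Z -> Prop) (b a : Z) :
  (forall q, P q -> (b <= q)%Z) -> P a -> exists p, P p /\ forall q, P q -> (p <= q)%Z.
Proof.
  intro Hb. induction a as [a IH] using (well_founded_ind (Zwf_well_founded b)). intro Ha.
  destruct (classic (exists q, P q /\ (q < a)%Z)) as [[q [Hq Hlt]]|Hmin].
  - apply (IH q); [split; [apply Hb|]|]; assumption.
  - exists a. split; [exact Ha|]. intros q Hq.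
    destruct (Z_le_gt_dec a q) as [|Hgt]; [assumption|].
    exfalso. apply Hmin. exists q. split; [assumption|lia].
Qed.

Lemma inv_INR_S_lt (eps : R) :
  (0 < eps)%R -> exists N, forall n, (N <= n)%nat -> (/ INR (S n) < eps)%R.
Proof.
  intro He. destruct (archimed_cor1 eps He) as [N [HN HN0]].
  exists N. intros n Hn. apply Rle_lt_trans with (/ INR N)%R; [|exact HN].
  apply Rinv_le_contravar; [apply lt_0_INR; exact HN0 | apply le_INR; lia].
Qed.

Definition quasi_additive (c : nat -> Z) : Prop :=
  forall m n, (c m + c n - 1 <= c (m + n)%nat <= c m + c n)%Z.

Lemma quasi_additive_mul (c : nat -> Z) :
  c 0%nat = 0%Z -> quasi_additive c ->
  forall n m, (Z.of_nat n * c m - Z.of_nat n <= c (n * m)%nat <= Z.of_nat n * c m)%Z.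
Proof.
  intros H0 Hq n m. induction n as [|n IH].
  - simpl. rewrite H0. lia.
  - simpl Nat.mul. specialize (Hq m (n * m)%nat). rewrite Nat2Z.inj_succ. lia.
Qed.

Lemma quasi_additive_Cauchy (c : nat -> Z) :
  c 0%nat = 0%Z -> quasi_additive c ->
  Cauchy_crit (fun n => (IZR (c (S n)) / INR (S n))%R).
Proof.
  intros H0 Hq eps He. destruct (@inv_INR_S_lt (eps / 2)%R) as [N HN]; [lra|].
  exists N. intros n m Hn Hm. unfold R_dist.
  pose proof (HN n Hn) as Hn'. pose proof (HN m Hm) as Hm'.
  pose proof (quasi_additive_mul H0 Hq (S m) (S n)) as I1.
  pose proof (quasi_additive_mul H0 Hq (S n) (S m)) as I2.
  rewrite Nat.mul_comm in I2.
  assert (Z1 : (- (Z.of_nat (S n) + Z.of_nat (S m)) <=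
                Z.of_nat (S m) * c (S n) - Z.of_nat (S n) * c (S m)
                <= Z.of_nat (S n) + Z.of_nat (S m))%Z) by lia.
  destruct Z1 as [Z1 Z2]. apply IZR_le in Z1, Z2.
  rewrite opp_IZR, plus_IZR, minus_IZR, !mult_IZR, <- !INR_IZR_INZ in Z1.
  rewrite plus_IZR, minus_IZR, !mult_IZR, <- !INR_IZR_INZ in Z2.
  set (a := INR (S n)) in *. set (b := INR (S m)) in *.
  set (A := IZR (c (S n))) in *. set (B := IZR (c (S m))) in *.
  assert (Ha : (a > 0)%R) by (apply lt_0_INR; lia).
  assert (Hb : (b > 0)%R) by (apply lt_0_INR; lia).
  assert (E : (A / a - B / b = (b * A - a * B) * (/ a * / b))%R) by (field; lra).
  assert (E2 : (/ a + / b = (a + b) * (/ a * / b))%R) by (field; lra).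
  assert (P : (/ a * / b > 0)%R) by (apply Rmult_lt_0_compat; apply Rinv_0_lt_compat; lra).
  rewrite E, Rabs_mult, (Rabs_pos_eq (/ a * / b)) by lra.
  apply Rle_lt_trans with ((a + b) * (/ a * / b))%R.
  - apply Rmult_le_compat_r; [lra|]. apply Rabs_le. lra.
  - rewrite <- E2. lra.
Qed.

Lemma limit_of_almost_sum (al be de : nat -> Z) (la lb ld : R) :
  (forall n, (be n + de n - 1 <= al n <= be n + de n)%Z) ->
  Un_cv (fun n => IZR (al n) / INR (S n))%R la ->
  Un_cv (fun n => IZR (be n) / INR (S n))%R lb ->
  Un_cv (fun n => IZR (de n) / INR (S n))%R ld -> la = (lb + ld)%R.
Proof.
  intros Hbd Ha Hb Hd. apply UL_sequence with (1 := Ha). intros eps He.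
  destruct (Hb (eps / 3)%R) as [N1 H1]; [lra|].
  destruct (Hd (eps / 3)%R) as [N2 H2]; [lra|].
  destruct (@inv_INR_S_lt (eps / 3)%R) as [N3 H3]; [lra|].
  exists (max (max N1 N2) N3). intros n Hn. unfold R_dist in *.
  specialize (H1 n ltac:(lia)). specialize (H2 n ltac:(lia)). specialize (H3 n ltac:(lia)).
  destruct (Hbd n) as [Z1 Z2]. apply IZR_le in Z1, Z2.
  rewrite minus_IZR, plus_IZR in Z1. rewrite plus_IZR in Z2.
  unfold Rdiv in *.
  set (x := (/ INR (S n))%R) in *.
  assert (Hx : (x > 0)%R) by (apply Rinv_0_lt_compat, lt_0_INR; lia).
  set (A := IZR (al n)) in *. set (B := IZR (be n)) in *. set (D := IZR (de n)) in *.
  assert (U1 : (A * x <= B * x + D * x)%R) by nra.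
  assert (U2 : (B * x + D * x - x <= A * x)%R) by nra.
  apply Rabs_def2 in H1. apply Rabs_def2 in H2. apply Rabs_def1; lra.
Qed.

Section Dominant.

Variables (G : Group) (le : G -> G -> Prop) (g : G).
Hypotheses (Hbi : bi_invariant le) (Htot : total_rel le) (Hdom : dominant le g).
Implicit Types (h k x y : G) (p q : Z).

Lemma zpow_le_mono p q : (p <= q)%Z -> le (zpow g p) (zpow g q).
Proof.
  intro Hpq. replace q with (p + Z.of_nat (Z.to_nat (q - p)))%Z by lia.
  rewrite zpow_add, zpow_of_nat. rewrite <- (gmul1r _ (zpow g p)) at 1.
  apply (ord_mul_l Hbi), (natpow_ge1 Hbi), (proj1 Hdom).
Qed.

Lemma zpow_le_reflect p q : le (zpow g q) (zpow g p) -> (q <= p)%Z.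
Proof.
  intro H. destruct (Z_le_gt_dec q p) as [|Hlt]; [assumption|exfalso].
  destruct Hdom as [Hg [Hne _]].
  apply Hne, (ord_antisym Hbi); [|exact Hg].
  apply (ord_cancel_l Hbi) with (zpow g p). rewrite gmul1r.
  apply (ord_trans Hbi) with (zpow g q); [|exact H].
  replace q with (Z.succ p + Z.of_nat (Z.to_nat (q - p - 1)))%Z by lia.
  rewrite zpow_add, zpow_succ, zpow_of_nat.
  rewrite <- (gmul1r _ (zpow g p ** g)) at 1.
  apply (ord_mul_l Hbi), (natpow_ge1 Hbi), Hg.
Qed.

Definition is_ceil_exp x p : Prop :=
  le x (zpow g p) /\ forall q, le x (zpow g q) -> (p <= q)%Z.

Lemma ceil_exp_exists x : exists p, is_ceil_exp x p.
Proof.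
  destruct Hdom as [_ [_ Hcof]].
  destruct (Hcof x) as [n Hn]. destruct (Hcof (ginv x)) as [m Hm].
  assert (Hlow : le (zpow g (- Z.of_nat m)) x).
  { pose proof (ord_mul_r Hbi (ginv (natpow g m)) (ord_mul_l Hbi x Hm)) as H.
    rewrite gmulVr, gmul1l, <- gmulA, gmulVr, gmul1r in H.
    rewrite zpow_neg_nat. exact H. }
  apply (@Z_least_element (fun q => le x (zpow g q)) (- Z.of_nat m)%Z (Z.of_nat n)).
  - intros q Hq. apply zpow_le_reflect, (ord_trans Hbi) with x; assumption.
  - rewrite zpow_of_nat. exact Hn.
Qed.

Lemma ceil_exp_mono x y p q : le x y -> is_ceil_exp x p -> is_ceil_exp y q -> (p <= q)%Z.
Proof. intros Hxy [_ Hp] [Hq _]. apply Hp, (ord_trans Hbi) with y; assumption. Qed.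

Lemma ceil_exp_unique x p q : is_ceil_exp x p -> is_ceil_exp x q -> p = q.
Proof.
  intros Hp Hq. apply Z.le_antisymm; eapply ceil_exp_mono; eauto; apply (ord_refl Hbi).
Qed.

Lemma ceil_exp_zpow p : is_ceil_exp (zpow g p) p.
Proof. split; [apply (ord_refl Hbi) | intro q; apply zpow_le_reflect]. Qed.

Lemma ceil_exp_pred_le x p : is_ceil_exp x p -> le (zpow g (p - 1)) x.
Proof.
  intros [_ Hmin]. destruct (Htot (zpow g (p - 1)) x) as [H|H]; [exact H|].
  specialize (Hmin _ H). lia.
Qed.

Lemma ceil_exp_mul x y a b c :
  is_ceil_exp x a -> is_ceil_exp y b -> is_ceil_exp (x ** y) c ->
  (a + b - 1 <= c <= a + b)%Z.
Proof.
  intros [Hxa Hamin] Hb [Hxy Hcmin]. split.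
  - destruct (Z_le_gt_dec (a + b - 1) c) as [|Hlt]; [assumption|exfalso].
    apply (not_ord_mul Hbi (x := x) (y := y) (z := zpow g (a - 1)) (t := zpow g (b - 1))).
    + intro H. specialize (Hamin _ H). lia.
    + exact (ceil_exp_pred_le Hb).
    + rewrite <- zpow_add. apply (ord_trans Hbi) with (zpow g c); [exact Hxy|].
      apply zpow_le_mono. lia.
  - apply Hcmin. rewrite zpow_add. apply (ord_mul Hbi); [exact Hxa | apply Hb].
Qed.

Definition halfspace (n : Z) (x : G) : Prop := ~ le x (zpow g (n - 1)).

Lemma halfspace_iff x p n : is_ceil_exp x p -> (halfspace n x <-> (n <= p)%Z).
Proof.
  intros [Hxp Hmin]. unfold halfspace. split.
  - intro Hn. destruct (Z_le_gt_dec n p) as [|Hgt]; [assumption|exfalso].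
    apply Hn, (ord_trans Hbi) with (zpow g p); [exact Hxp|]. apply zpow_le_mono. lia.
  - intros Hnp Hle. specialize (Hmin _ Hle). lia.
Qed.

Lemma is_height_ceil_exp x n : is_height halfspace x n -> is_ceil_exp x n.
Proof.
  intros [Hn Hmax]. destruct (ceil_exp_exists x) as [p Hp].
  replace n with p; [exact Hp|]. apply Z.le_antisymm.
  - apply Hmax. apply (halfspace_iff p Hp). lia.
  - apply (halfspace_iff n Hp). exact Hn.
Qed.

Lemma halfspace_filtration : half_space_filtration halfspace.
Proof.
  split; [|split].
  - intro n. split.
    + intros x Hx. destruct (ceil_exp_exists x) as [p Hp].
      apply (halfspace_iff _ Hp) in Hx. apply (halfspace_iff _ Hp). lia.
    + exists (zpow g n). rewrite !(halfspace_iff _ (ceil_exp_zpow n)). lia.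
  - intro x. destruct (ceil_exp_exists x) as [p Hp].
    exists (p + 1)%Z. rewrite (halfspace_iff _ Hp). lia.
  - intro x. destruct (ceil_exp_exists x) as [p Hp].
    exists p. rewrite (halfspace_iff _ Hp). lia.
Qed.

Lemma halfspace_order : half_space_order le halfspace.
Proof.
  split; [exact (proj1 Hbi)|]. split; [exact halfspace_filtration|].
  exists 1%R. intros x y kx ky Hx Hy Hw.
  apply is_height_ceil_exp in Hx, Hy. apply Rge_le, le_IZR in Hw.
  apply (ord_trans Hbi) with (zpow g ky); [apply Hy|].
  apply (ord_trans Hbi) with (zpow g (kx - 1)); [apply zpow_le_mono; lia|].
  apply ceil_exp_pred_le, Hx.
Qed.

Lemma left_mul_quasi_automorphisms :
  by_quasi_automorphisms halfspace (fun a x : G => a ** x).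
Proof.
  exists 1%R. intros k x y kx ky kkx kky Hx Hy Hkx Hky.
  apply is_height_ceil_exp in Hx, Hy, Hkx, Hky.
  destruct (ceil_exp_exists k) as [p Hp].
  pose proof (ceil_exp_mul Hp Hx Hkx). pose proof (ceil_exp_mul Hp Hy Hky).
  rewrite Rabs_Zabs. apply IZR_le. lia.
Qed.

Lemma left_mul_unbounded : unbounded_action halfspace (fun a x : G => a ** x).
Proof.
  assert (Hheight : forall n m, is_height halfspace (zpow g n ** gone) m -> m = n).
  { intros n m Hm. apply is_height_ceil_exp in Hm. rewrite gmul1r in Hm.
    exact (ceil_exp_unique Hm (ceil_exp_zpow n)). }
  exists g, gone.
  split; intro M; exists M; intros n Hn m Hm; rewrite (Hheight n m Hm); lia.
Qed.

Theorem quasi_total_of_dominant : quasi_total le.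
Proof.
  exists (carrier G), le, halfspace, (fun a x : G => a ** x).
  split; [exact halfspace_order|]. split; [|split; [|split; [|split]]].
  - split; [exact (gmul1l G) | intros; symmetry; apply gmulA].
  - intros a Ha. rewrite <- (gmul1r G a). apply Ha.
  - exact left_mul_quasi_automorphisms.
  - exact left_mul_unbounded.
  - exact (ord_iff_induced_left_mul Hbi).
Qed.

Lemma ceil_exp_pow_mul h k n a b c :
  is_ceil_exp (natpow h n) a -> is_ceil_exp (natpow k n) b ->
  is_ceil_exp (natpow (h ** k) n) c -> (a + b - 1 <= c <= a + b)%Z.
Proof.
  intros Ha Hb Hc.
  destruct (ceil_exp_exists (natpow h n ** natpow k n)) as [p Hp].
  destruct (ceil_exp_exists (natpow k n ** natpow h n)) as [q Hq].
  pose proof (ceil_exp_mul Ha Hb Hp). pose proof (ceil_exp_mul Hb Ha Hq).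
  destruct (pow_mul_between h k n Hbi Htot) as [[H1 H2]|[H1 H2]].
  - pose proof (ceil_exp_mono H1 Hp Hc). pose proof (ceil_exp_mono H2 Hc Hq). lia.
  - pose proof (ceil_exp_mono H1 Hq Hc). pose proof (ceil_exp_mono H2 Hc Hp). lia.
Qed.

Lemma growth_limit_exists h : exists r, growth_limit le g h r.
Proof.
  pose (c m := proj1_sig (constructive_indefinite_description _ (ceil_exp_exists (natpow h m)))).
  assert (Hc : forall m, is_ceil_exp (natpow h m) (c m)) by (intro m; exact (proj2_sig _)).
  assert (Hc0 : c 0%nat = 0%Z) by exact (ceil_exp_unique (Hc 0%nat) (ceil_exp_zpow 0)).
  assert (Hqa : quasi_additive c).
  { intros m n. apply (ceil_exp_mul (Hc m) (Hc n)). rewrite <- natpow_add. apply Hc. }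
  destruct (R_complete _ (quasi_additive_Cauchy Hc0 Hqa)) as [r Hr].
  exists r, (fun n => c (S n)). split; [intro n; apply Hc | exact Hr].
Qed.

Lemma growth_limit_additive h k a b c :
  growth_limit le g h a -> growth_limit le g k b -> growth_limit le g (h ** k) c ->
  c = (a + b)%R.
Proof.
  intros [ah [Hah Ha]] [bk [Hbk Hb]] [ck [Hck Hc]].
  apply (@limit_of_almost_sum ck ah bk); try assumption.
  intro n. exact (ceil_exp_pow_mul (Hah n) (Hbk n) (Hck n)).
Qed.

End Dominant.

Theorem proposition1p4 (G : Group) (le : G -> G -> Prop) :
  bi_invariant le -> total_rel le -> admissible le ->
  quasi_total le /\
  forall g : G, dominant le g ->
    exists gamma : G -> R,
      (forall h : G, growth_limit le g h (gamma h)) /\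
      (forall h k : G, gamma (gmul h k) = (gamma h + gamma k)%R).
Proof.
  intros Hbi Htot [g0 Hg0]. split; [exact (quasi_total_of_dominant Hbi Htot Hg0)|].
  intros g Hg.
  pose (gamma h := proj1_sig (constructive_indefinite_description _
                                (growth_limit_exists Hbi Htot Hg h))).
  assert (Hgamma : forall h, growth_limit le g h (gamma h)) by (intro h; exact (proj2_sig _)).
  exists gamma. split; [exact Hgamma|].
  intros h k. exact (growth_limit_additive Hbi Htot Hg (Hgamma h) (Hgamma k) (Hgamma (h ** k))).
Qed.
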